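(* Let $S$, $S'$ and $R$ be finite sequences of propositional formulae. If $S \equiv S'$ then $S \cdot R \equiv S' \cdot R$.
   Context: Models are truth assignments. For a formula $G$: $I \leq_G J$ iff $I \models G$ or $J \not\models G$. For a sequence $S=[S_1,\ldots,S_m]$: $I \leq_S J$ iff either $S=[]$, or ($I \leq_{S_1} J$ and (either $J \not\leq_{S_1} I$ or $I \leq_{R'} J$)), where $R'=[S_2,\ldots,S_m]$. For sequences, $S\equiv R$ means $I \leq_S J$ and $I\leq_R J$ coincide for all pairs of models $I,J$. $S\cdot R$ denotes concatenation of sequences. *)

From Stdlib Require Import List.
Import ListNotations.

Inductive form : Type :=
  | FVar : nat -> form
  | FTrue : form
  | FFalse : form
  | FNot : form -> form
  | FAnd : form -> form -> form
  | FOr : form -> form -> form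
  | FImp : form -> form -> form.

Definition model := nat -> bool.

Fixpoint sat (I : model) (G : form) : Prop :=
  match G with
  | FVar n => I n = true
  | FTrue => True
  | FFalse => False
  | FNot a => ~ sat I a
  | FAnd a b => sat I a /\ sat I b
  | FOr a b => sat I a \/ sat I b
  | FImp a b => sat I a -> sat I b
  end.

Definition le_form (G : form) (I J : model) : Prop := sat I G \/ ~ sat J G.

Fixpoint le_seq (S : list form) (I J : model) : Prop :=
  match S with
  | [] => True
  | S1 :: R' => le_form S1 I J /\ (~ le_form S1 J I \/ le_seq R' I J)
  end.

Definition seq_equiv (S R : list form) : Prop :=
  forall I J : model, le_seq S I J <-> le_seq R I J.

(* The order of [S ++ R] is the lexicographic refinement of the order of [S]
   by the order of [R]; this refinement only depends on the relation [<=_S]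
   itself, so equivalent prefixes give equivalent concatenations. *)

From Stdlib Require Import List Classical.

Definition lex {A : Type} (P Q : A -> A -> Prop) (x y : A) : Prop :=
  P x y /\ (~ P y x \/ Q x y).

Lemma lex_assoc {A : Type} (P Q R : A -> A -> Prop) (x y : A) :
  lex P (lex Q R) x y <-> lex (lex P Q) R x y.
Proof.
  unfold lex.
  destruct (classic (P y x)), (classic (Q y x)); tauto.
Qed.

Lemma lex_ext_l {A : Type} (P P' Q : A -> A -> Prop) (x y : A) :
  (forall u v, P u v <-> P' u v) -> lex P Q x y <-> lex P' Q x y.
Proof.
  intros HP; unfold lex; rewrite (HP x y), (HP y x); reflexivity.
Qed.

Lemma le_seq_app (S R : list form) (I J : model) :
  le_seq (S ++ R) I J <-> lex (le_seq S) (le_seq R) I J.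
Proof.
  induction S as [|a S IH]; cbn [app le_seq].
  - unfold lex; tauto.
  - rewrite IH; exact (lex_assoc (le_form a) (le_seq S) (le_seq R) I J).
Qed.

Theorem theorem7 (S S' R : list form) :
  seq_equiv S S' -> seq_equiv (S ++ R) (S' ++ R).
Proof.
  intros HS I J.
  rewrite !le_seq_app.
  exact (lex_ext_l _ _ _ I J HS).
Qed.
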